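(* Let $Q=2^q$, $n\ge1$, $\varepsilon\in[0,1]$, $d\in[0,1]$ with $dn$ an integer, $\delta_1,\delta_2\ge0$, and let $A\subseteq[Q]^n$, $B\subseteq[Q]^n$ be $(d,2\varepsilon)$-diverse with $|A|\ge Q^{n(1-\delta_1)}$ and $|B|\ge Q^{n(1-\delta_2)}$. If $W$ is drawn from $\mathcal{W}_{Q,\varepsilon}$, then with probability at least $1/2$, $$\mathcal{R}^{(0)}_{W,n}\ge 2q\left(1-\left(\frac{\delta_1+\delta_2}{2}+d\right)\right)-2.$$
   Context: Fix an integer $q\ge1$, $Q=2^q$, $[Q]=\{1,\dots,Q\}$, and a symbol $\phi\notin[Q]$. A channel is $W=(W_1,W_2)$ with $W_i:[Q]^2\to[Q]\cup\{\phi\}$; $W^{(n)}_i(x,y)=(W_i(x_1,y_1),\dots,W_i(x_n,y_n))$ for $x,y\in[Q]^n$. A zero-error code of block length $n$ with message sets $[M_1],[M_2]$ consists of encoders $E_i:[M_i]\to[Q]^n$ and decoders $D_i:([Q]\cup\{\phi\})^n\to[M_i]$ with $D_i(W^{(n)}_i(E_1(m_1),E_2(m_2)))=m_i$ for $i=1,2$ and all message pairs; $\mathcal{R}^{(0)}_{W,n}$ is the supremum of $\frac1n\log_2(M_1M_2)$ over such codes. $\mathcal{W}_{Q,\varepsilon}$ is the distribution over channels in which, independently for every $(x,y)\in[Q]^2$, $W(x,y)=(\phi,\phi)$ with probability $\varepsilon$ and $W(x,y)=(x,y)$ otherwise. A pair $(x^{(n)},y^{(n)})\in[Q]^n\times[Q]^n$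 is $(d,\varepsilon)$-diverse if for every index set $I\subseteq[n]$ with $|I|=dn$, $|\{(x_j,y_j):j\in I\}|>\varepsilon Q^2$; sets $A,B\subseteq[Q]^n$ are $(d,\varepsilon)$-diverse if every $(x^{(n)},y^{(n)})\in A\times B$ is $(d,\varepsilon)$-diverse. *)

From Stdlib Require Import Reals ClassicalDescription.
From mathcomp Require Import all_boot.

Set Implicit Arguments.
Unset Strict Implicit.
Unset Printing Implicit Defensive.

Open Scope R_scope.

(* Alphabet [Q] is modelled by 'I_Q (0-based), the output alphabet
   [Q] ∪ {phi} by option 'I_Q (None = phi). *)
Definition out (Q : nat) := option 'I_Q.

Definition word (Q n : nat) := {ffun 'I_n -> 'I_Q}.

Record channel (Q : nat) := Channel {
  W1 : 'I_Q -> 'I_Q -> out Q;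
  W2 : 'I_Q -> 'I_Q -> out Q }.

Definition chan_n (Q n : nat) (Wi : 'I_Q -> 'I_Q -> out Q)
    (x y : word Q n) : 'I_n -> out Q :=
  fun j => Wi (x j) (y j).

Definition zero_error_code (Q n M1 M2 : nat) (W : channel Q)
    (E1 : 'I_M1 -> word Q n) (E2 : 'I_M2 -> word Q n)
    (D1 : ('I_n -> out Q) -> 'I_M1) (D2 : ('I_n -> out Q) -> 'I_M2) : Prop :=
  forall (m1 : 'I_M1) (m2 : 'I_M2),
    D1 (chan_n (W1 W) (E1 m1) (E2 m2)) = m1 /\
    D2 (chan_n (W2 W) (E1 m1) (E2 m2)) = m2.

Definition log2 (x : R) : R := (ln x / ln 2).

Definition zero_error_rates (Q n : nat) (W : channel Q) (r : R) : Prop :=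
  exists (M1 M2 : nat) (E1 : 'I_M1 -> word Q n) (E2 : 'I_M2 -> word Q n)
         (D1 : ('I_n -> out Q) -> 'I_M1) (D2 : ('I_n -> out Q) -> 'I_M2),
    (0 < M1)%nat /\ (0 < M2)%nat /\ zero_error_code W E1 E2 D1 D2 /\
    r = (/ INR n * log2 (INR (M1 * M2)%N)).

(* "R^(0)_{W,n} >= b": the supremum of the rates exists and is >= b. *)
Definition zero_error_rate_ge (Q n : nat) (W : channel Q) (b : R) : Prop :=
  exists c : R, is_lub (zero_error_rates n W) c /\ (b <= c).

Definition erasure_channel (Q : nat) (Er : {set 'I_Q * 'I_Q}) : channel Q :=
  Channel (fun x y => if (x, y) \in Er then None else Some x)
          (fun x y => if (x, y) \in Er then None else Some y).

(* Probability of the erasure pattern Er under W_{Q,eps}: each pair erased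
   independently with probability eps. *)
Definition pattern_weight (Q : nat) (eps : R) (Er : {set 'I_Q * 'I_Q}) : R :=
  (eps ^ #|Er| * (1 - eps) ^ (Q * Q - #|Er|)%N).

Definition prob_W (Q : nat) (eps : R) (P : channel Q -> Prop) : R :=
  foldr Rplus 0
    [seq (if excluded_middle_informative (P (erasure_channel Er))
          then pattern_weight eps Er else 0)
    | Er <- enum {set 'I_Q * 'I_Q}].

Definition diverse_pair (Q n : nat) (d eps : R) (x y : word Q n) : Prop :=
  forall I : {set 'I_n},
    INR #|I| = (d * INR n) ->
    (eps * INR (Q * Q)%N < INR #|[set (x j, y j) | j in I]|).

Definition diverse_sets (Q n : nat) (d eps : R) (A B : {set word Q n}) : Prop :=
  forall x y, x \in A -> y \in B -> diverse_pair d eps x y.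

From Stdlib Require Import Reals Lra ClassicalDescription FunctionalExtensionality.
From mathcomp Require Import all_boot all_order ssralg ssrnum Rstruct.
From mathcomp.algebra_tactics Require Import lra.
Import Order.TTheory GRing.Theory Num.Theory.

Set Implicit Arguments.
Unset Strict Implicit.
Unset Printing Implicit Defensive.

Open Scope R_scope.

(* Proof of Theorem 3.  Write N = Q^2 with Q = 2^q; under W_{Q,eps} the set Er
   of erased input pairs is a binomial(N, eps) random subset of [Q]^2.

   By Markov's inequality at twice the mean, #|Er| <= 2 eps N
      with probability at least 1/2 (binomial_mean, markov_half,
      prob_W_ge_half).  It then suffices to treat one such pattern Er.
   2. Few erasures.  By (d, 2eps)-diversity, every x in A, y in B have fewer
      than k = dn positions j with (x_j, y_j) in Er (diverse_few_erasures).
   3. Packing.  Greedily extract k-separated subsets A' of A and B' of B,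
      losing at most the Hamming-ball size 2^n Q^k (hamming_packing).  Since
      fewer than k letters are erased, decoding to the unique consistent
      codeword is error-free, so rate (1/n) log2 (#|A'| #|B'|) is achieved
      (separated_code_rate); rates are bounded, so the supremum exists and
      exceeds it (zero_error_rate_ge_of_rate).
   4. Arithmetic.  log2 #|A'| >= n(1-delta1)q - n - dnq and likewise for B',
      which gives the claimed bound (rate_lower_bound). *)

Lemma sum_by_card (V : nmodType) (T : finType) (F : nat -> V) :
  (\sum_(S : {set T}) F #|S| = \sum_(k < #|T|.+1) F k *+ 'C(#|T|, k))%R.
Proof.
have card_lt (S : {set T}) : (#|S| < #|T|.+1)%N by rewrite ltnS max_card.
rewrite (partition_big (fun S : {set T} => inord #|S| : 'I_#|T|.+1) xpredT) //=.
apply: eq_bigr => k _.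
rewrite -card_draws -sumr_const; apply: eq_big => [S|S /eqP <-].
  by rewrite inE -(inj_eq val_inj) /= inordK.
by rewrite inordK.
Qed.

Section Binomial.
Variables (R : comNzRingType) (p : R).
Local Open Scope ring_scope.

Lemma binomial_mass (N : nat) :
  \sum_(k < N.+1) (p ^+ k * (1 - p) ^+ (N - k)) *+ 'C(N, k) = 1.
Proof.
rewrite -[RHS](expr1n _ N) -[X in X ^+ N](subrK p) exprDn.
by apply: eq_bigr => k _; rewrite mulrC.
Qed.

Lemma binomial_mean (N : nat) :
  \sum_(k < N.+1) (k%:R * (p ^+ k * (1 - p) ^+ (N - k))) *+ 'C(N, k) = N%:R * p.
Proof.
case: N => [|M]; first by rewrite big_ord_recl big_ord0 !mul0r mul0rn addr0.
rewrite big_ord_recl /= mul0r mul0rn add0r.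
transitivity (M.+1%:R * p * \sum_(i < M.+1) (p ^+ i * (1 - p) ^+ (M - i)) *+ 'C(M, i));
  last by rewrite binomial_mass mulr1.
rewrite mulr_sumr; apply: eq_bigr => i _.
rewrite /bump /= add1n subSS mulr_natl -mulrnA -mul_bin_diag mulrnA mulrnAr.
by congr (_ *+ _); rewrite exprS -[LHS]mulr_natl !mulrA.
Qed.

End Binomial.

Section Markov.
Local Open Scope ring_scope.

Lemma markov_half (R : realFieldType) (T : finType) (w f : T -> R) :
  (forall X, 0 <= w X) -> (forall X, 0 <= f X) -> \sum_X w X = 1 ->
  2^-1 <= \sum_(X | f X <= 2 * \sum_Y f Y * w Y) w X.
Proof.
move=> w0 f0 w1; set m := \sum_Y f Y * w Y.
have fw0 X : 0 <= f X * w X by rewrite mulr_ge0.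
have mass : 1 = \sum_(X | f X <= 2 * m) w X + \sum_(X | ~~ (f X <= 2 * m)) w X.
  by rewrite -[LHS]w1 (bigID (fun X => f X <= 2 * m)).
suff bad_small : \sum_(X | ~~ (f X <= 2 * m)) w X <= 2^-1 by lra.
have [m0|m_pos] : m = 0 \/ 0 < m.
  have : 0 <= m by rewrite sumr_ge0.
  by rewrite le_eqVlt => /orP [/eqP <-|]; [left|right].
- rewrite big1 ?invr_ge0 ?ler0n // => X; rewrite m0 mulr0 -ltNge => fX.
  have /eqP : f X * w X = 0 by apply: (psumr_eq0P (fun Y _ => fw0 Y) m0).
  by rewrite mulf_eq0 gt_eqF //= => /eqP.
- have bad_mass : (\sum_(X | ~~ (f X <= 2 * m)) w X) * (2 * m) <= m.
    apply: (@le_trans _ _ (\sum_(X | ~~ (f X <= 2 * m)) f X * w X)).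
      rewrite mulr_suml; apply: ler_sum => X; rewrite -ltNge => /ltW fX.
      by rewrite mulrC ler_wpM2r.
    rewrite [X in _ <= X](bigID (fun X => f X <= 2 * m)) /= lerDr.
    exact: sumr_ge0.
  nra.
Qed.

End Markov.

(* If each element of T lies in a random subset X independently with
   probability p, then #|X| is binomial(#|T|, p); by Markov, an event holding
   whenever #|X| <= 2 p #|T| has probability at least 1/2. *)
Lemma prob_small_pattern (T : finType) (p : R) (good : {set T} -> Prop) :
  0 <= p <= 1 ->
  (forall X : {set T}, INR #|X| <= 2 * p * INR #|T| -> good X) ->
  / 2 <= foldr Rplus 0
    [seq (if excluded_middle_informative (good X)
          then p ^ #|X| * (1 - p) ^ (#|T| - #|X|) else 0) | X <- enum {set T}].
Proof.
move=> [/RleP p0 /RleP p1] small_good; set N := #|T|.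
pose w (X : {set T}) := (p ^+ #|X| * (1 - p) ^+ (N - #|X|))%R.
have w0 X : (0 <= w X)%R by rewrite mulr_ge0 ?exprn_ge0 ?subr_ge0.
pose b k := (p ^+ k * (1 - p) ^+ (N - k))%R.
have w1 : (\sum_(X : {set T}) w X = 1)%R.
  by rewrite (sum_by_card T b) binomial_mass.
have mean : (\sum_(X : {set T}) #|X|%:R * w X = N%:R * p)%R.
  by rewrite (sum_by_card T (fun k => k%:R * b k)%R) binomial_mean.
have := markov_half w0 (fun X => ler0n _ #|X|) w1; rewrite mean => half.
rewrite foldrE big_map big_enum /=; apply/RleP; apply: le_trans half _.
rewrite [X in (X <= _)%R]big_mkcond; apply: ler_sum => X _.
case: (excluded_middle_informative (good X)) => [_|not_good] /=.
  by rewrite !RpowE RminusE; case: ifP => _; [apply: lexx | apply: w0].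
case: ifPn => // small; case: not_good; apply: small_good.
by move/RleP: small; rewrite -!INRE -!RmultE (_ : INR 2 = 2) // /N; Lra.lra.
Qed.

Lemma prob_W_ge_half (Q : nat) (eps : R) (P : channel Q -> Prop) :
  0 <= eps <= 1 ->
  (forall Er : {set 'I_Q * 'I_Q},
     INR #|Er| <= 2 * eps * INR (Q * Q) -> P (erasure_channel Er)) ->
  / 2 <= prob_W eps P.
Proof.
move=> eps01 small_P; have card_pairs : #|{: 'I_Q * 'I_Q}| = (Q * Q)%N.
  by rewrite card_prod card_ord.
rewrite /prob_W /pattern_weight -card_pairs.
apply: (prob_small_pattern (good := fun Er => P (erasure_channel Er))) => // Er.
by rewrite card_pairs; exact: small_P.
Qed.

(* Greedy packing: in a finite type where every ball of the reflexive symmetric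
   relation [close] has at most b points, every set A contains a subset A' of
   pairwise non-close points with #|A| <= #|A'| * b (pick a point, discard its
   ball, recurse). *)
Lemma greedy_packing (T : finType) (close : rel T) (b : nat) :
  reflexive close -> symmetric close ->
  (forall x, #|[set z | close x z]| <= b)%N ->
  forall A : {set T}, exists A' : {set T}, [/\ A' \subset A,
     {in A' &, forall x y, close x y -> x = y} & (#|A| <= #|A'| * b)%N].
Proof.
move=> refl sym ball A; have [m] := ubnP #|A|; elim: m A => // m IH A.
rewrite ltnS => A_le_m.
have [->|[x xA]] := set_0Vmem A.
  by exists set0; split; rewrite ?sub0set ?cards0 // => y z; rewrite inE.
set A1 := A :\: [set z | close x z].
have x_notin_A1 : x \notin A1 by rewrite !inE refl.
have A1_lt : (#|A1| < m)%N.
  apply: leq_trans A_le_m; apply: proper_card; apply/properP.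
  by split; [exact: subsetDl | exists x].
have [A1' [sub sep card_A1]] := IH A1 A1_lt.
have x_notin_A1' : x \notin A1' by apply: contra x_notin_A1; apply: (subsetP sub).
have far z : z \in A1' -> ~~ close x z.
  by move=> /(subsetP sub); rewrite !inE => /andP [].
exists (x |: A1'); split.
- rewrite subUset sub1set xA /=; apply: subset_trans sub _; exact: subsetDl.
- move=> y z; rewrite !inE => /orP [/eqP ->|yA] /orP [/eqP ->|zA] //.
  + by move=> cxz; move: (far z zA); rewrite cxz.
  + by rewrite sym => cxy; move: (far y yA); rewrite cxy.
  + exact: sep.
- rewrite cardsU1 x_notin_A1' add1n mulSn -(cardsID [set z | close x z] A).
  by apply: leq_add => //; apply: leq_trans (ball x); apply/subset_leq_card/subsetIr.
Qed.

Section Hamming.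
Variables (Q n : nat).

Definition hdist (x z : word Q n) : nat := #|[set j | x j != z j]|.

Lemma hdistxx (x : word Q n) : hdist x x = 0%N.
Proof. by apply/eqP; rewrite cards_eq0; apply/eqP/setP => j; rewrite !inE /= eqxx. Qed.

Lemma hdistC (x z : word Q n) : hdist x z = hdist z x.
Proof. by apply: eq_card => j; rewrite !inE eq_sym. Qed.

Definition separated (k : nat) (C : {set word Q n}) : Prop :=
  {in C &, forall x y, (hdist x y < k)%N -> x = y}.

(* A word z at distance < k from x is determined by the set of positions
   where it differs from x and by its first k letters there: at most
   2^n * Q^k such words. *)
Lemma hamming_ball_card (k : nat) (x : word Q n) : (0 < n)%N ->
  (#|[set z : word Q n | hdist x z < k]| <= 2 ^ n * Q ^ k)%N.
Proof.
move=> n_pos; pose j0 : 'I_n := Ordinal n_pos.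
pose diff (z : word Q n) := [set j | x j != z j].
pose code (z : word Q n) := (diff z, [ffun i : 'I_k => z (nth j0 (enum (diff z)) i)]).
rewrite -(card_in_imset (f := code)); last first.
  move=> z1 z2; rewrite !inE => z1_near _ [same_diff same_vals].
  apply/ffunP => j; case: (boolP (j \in diff z1)) => j_diff; last first.
    move: (j_diff); rewrite same_diff; move: j_diff.
    by rewrite !inE !negbK => /eqP <- /eqP <-.
  have j_idx : (index j (enum (diff z1)) < k)%N.
    by apply: leq_trans (ltnW z1_near); rewrite /hdist cardE index_mem mem_enum.
  move/ffunP: same_vals => /(_ (Ordinal j_idx)); rewrite !ffunE /= -same_diff.
  by rewrite nth_index ?mem_enum.
apply: leq_trans (max_card _) _.
by rewrite card_prod -cardsT -powersetT card_powerset cardsT card_ffun !card_ord.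
Qed.

Lemma hamming_packing (k : nat) (A : {set word Q n}) : (0 < n)%N ->
  exists A' : {set word Q n},
    [/\ A' \subset A, separated k A' & (#|A| <= #|A'| * (2 ^ n * Q ^ k))%N].
Proof.
move=> n_pos; case: k => [|k].
  exists A; split=> //; last by rewrite expn0 muln1 leq_pmulr ?expn_gt0.
apply: (greedy_packing (close := fun x z => hdist x z < k.+1)%N) => [x|x z|x] /=.
- by rewrite hdistxx.
- by rewrite hdistC.
- exact: hamming_ball_card.
Qed.

End Hamming.

Lemma INR_pos (m : nat) : (0 < m)%N -> 0 < INR m.
Proof. by move=> m_pos; apply: lt_0_INR; apply/ssrnat.ltP. Qed.

Lemma ln2_pos : 0 < ln 2.
Proof. by have := ln_lt_2; Lra.lra. Qed.

Lemma log2_le (x y : R) : 0 < x -> x <= y -> log2 x <= log2 y.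
Proof.
move=> x_pos [x_lt_y|<-]; last exact: Rle_refl.
apply: Rmult_le_compat_r; first by left; apply: Rinv_0_lt_compat; exact: ln2_pos.
by left; apply: ln_increasing.
Qed.

Lemma INR_expn (m e : nat) : INR (m ^ e)%N = INR m ^ e.
Proof. by elim: e => //= e IH; rewrite expnS mult_INR IH. Qed.

Lemma log2_mult (x y : R) : 0 < x -> 0 < y -> log2 (x * y) = log2 x + log2 y.
Proof. by move=> x_pos y_pos; rewrite /log2 ln_mult //; Lra.lra. Qed.

Lemma log2_Rpower_2expn (q : nat) (t : R) :
  log2 (Rpower (INR (2 ^ q)%N) t) = t * INR q.
Proof.
have INR_2 : INR 2 = 2 by rewrite /=; Lra.lra.
rewrite /log2 /Rpower ln_exp INR_expn INR_2 ln_pow; last by Lra.lra.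
by field; apply: Rgt_not_eq; exact: ln2_pos.
Qed.

Lemma log2_2expn (e : nat) : log2 (INR (2 ^ e)%N) = INR e.
Proof.
have := log2_Rpower_2expn e 1; rewrite Rmult_1_l /Rpower Rmult_1_l exp_ln //.
by apply: INR_pos; rewrite expn_gt0.
Qed.

Section Decoding.
Variables (Q n : nat).

Definition consistent (o : 'I_n -> out Q) (c : word Q n) : bool :=
  [forall j, (o j == None) || (o j == Some (c j))].

Definition decoder (C : {set word Q n}) (C_pos : (0 < #|C|)%N)
    (o : 'I_n -> out Q) : 'I_#|C| :=
  odflt (Ordinal C_pos) [pick m : 'I_#|C| | consistent o (enum_val m)].

(* If C is k-separated and fewer than k letters of codeword m are erased,
   m is the only consistent codeword, so the decoder recovers m. *)
Lemma decoder_correct (k : nat) (C : {set word Q n}) (C_pos : (0 < #|C|)%N) :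
  separated k C ->
  forall (m : 'I_#|C|) (o : 'I_n -> out Q),
  (forall j, o j = None \/ o j = Some (enum_val m j)) ->
  (#|[set j | o j == None]| < k)%N ->
  decoder C_pos o = m.
Proof.
move=> sep m o erased few; rewrite /decoder.
case: pickP => [m' consistent_m'|none] /=; last first.
  have /negP[] := none m; apply/forallP => j.
  by case: (erased j) => ->; rewrite eqxx ?orbT.
apply: enum_val_inj; apply: sep; rewrite ?enum_valP //.
apply: leq_ltn_trans few; apply: subset_leq_card; apply/subsetP => j.
rewrite !inE => differ; move/forallP: consistent_m' => /(_ j) /orP [//|/eqP o_m'].
by case: (erased j) => o_m; rewrite o_m // in o_m'; case: o_m' differ => ->; rewrite eqxx.
Qed.

Lemma separated_code_rate (k : nat) (Er : {set 'I_Q * 'I_Q})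
    (A' B' : {set word Q n}) :
  (0 < #|A'|)%N -> (0 < #|B'|)%N -> separated k A' -> separated k B' ->
  (forall x y, x \in A' -> y \in B' -> (#|[set j | (x j, y j) \in Er]| < k)%N) ->
  zero_error_rates n (erasure_channel Er) (/ INR n * log2 (INR (#|A'| * #|B'|))).
Proof.
move=> A'_pos B'_pos sepA sepB few.
exists #|A'|, #|B'|, (fun m => enum_val m), (fun m => enum_val m).
exists (decoder A'_pos), (decoder B'_pos).
do 3!split=> //; move=> m1 m2.
have few12 := few _ _ (enum_valP m1) (enum_valP m2).
have few_erased (o : 'I_n -> out Q) :
    (forall j, o j == None -> (enum_val m1 j, enum_val m2 j) \in Er) ->
    (#|[set j | o j == None]| < k)%N.
  move=> erased_in_Er; apply: leq_ltn_trans few12; apply: subset_leq_card.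
  by apply/subsetP => j; rewrite !inE => /erased_in_Er.
split.
- apply: (decoder_correct A'_pos sepA) => [j|].
    by rewrite /chan_n /=; case: ifP => _; [left|right].
  by apply: few_erased => j; rewrite /chan_n /=; case: ifP.
- apply: (decoder_correct B'_pos sepB) => [j|].
    by rewrite /chan_n /=; case: ifP => _; [left|right].
  by apply: few_erased => j; rewrite /chan_n /=; case: ifP.
Qed.

(* A message set that can be recovered from channel outputs has at most
   (Q+1)^n elements, the number of possible outputs. *)
Lemma decodable_card (M : nat) (send : 'I_M -> 'I_n -> out Q)
    (D : ('I_n -> out Q) -> 'I_M) :
  cancel send D -> (M <= Q.+1 ^ n)%N.
Proof.
move=> sendK; pose tab (m : 'I_M) := [ffun j => send m j].
have tab_inj : injective tab.
  move=> a b /ffunP same; rewrite -(sendK a) -(sendK b); congr D.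
  by apply: functional_extensionality => j; have := same j; rewrite !ffunE.
by have := leq_card _ tab_inj; rewrite card_ffun card_option !card_ord.
Qed.

Lemma zero_error_rates_bounded (W : channel Q) : (0 < n)%N ->
  bound (zero_error_rates n W).
Proof.
move=> n_pos; exists (/ INR n * log2 (INR (Q.+1 ^ n * Q.+1 ^ n))).
move=> r [M1 [M2 [E1 [E2 [D1 [D2 [M1_pos [M2_pos [code ->]]]]]]]]].
have M1_le : (M1 <= Q.+1 ^ n)%N.
  pose send m := chan_n (W1 W) (E1 m) (E2 (Ordinal M2_pos)).
  apply: (decodable_card (D := D1) (send := send)).
  by move=> m; case: (code m (Ordinal M2_pos)).
have M2_le : (M2 <= Q.+1 ^ n)%N.
  pose send m := chan_n (W2 W) (E1 (Ordinal M1_pos)) (E2 m).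
  apply: (decodable_card (D := D2) (send := send)).
  by move=> m; case: (code (Ordinal M1_pos) m).
apply: Rmult_le_compat_l; first by left; apply/Rinv_0_lt_compat/INR_pos.
apply: log2_le; first by apply: INR_pos; rewrite muln_gt0 M1_pos.
by apply: le_INR; apply/ssrnat.leP; apply: leq_mul.
Qed.

(* Any achievable rate r >= b witnesses R^(0)_{W,n} >= b: the rates are
   bounded, so their supremum exists and dominates r. *)
Lemma zero_error_rate_ge_of_rate (W : channel Q) (r b : R) : (0 < n)%N ->
  zero_error_rates n W r -> b <= r -> zero_error_rate_ge n W b.
Proof.
move=> n_pos r_ach b_le_r.
have [c c_lub] :=
  completeness _ (zero_error_rates_bounded W n_pos) (ex_intro _ r r_ach).
by exists c; split => //; apply: Rle_trans b_le_r (proj1 c_lub r r_ach).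
Qed.

End Decoding.

(* Under a pattern Er with at most eps Q^2 pairs, a (d, eps)-diverse pair of
   words has fewer than dn erased positions: dn positions would already show
   more than eps Q^2 distinct pairs, all of them erased. *)
Lemma diverse_few_erasures (Q n k : nat) (d eps : R) (x y : word Q n)
    (Er : {set 'I_Q * 'I_Q}) :
  diverse_pair d eps x y -> d * INR n = INR k ->
  INR #|Er| <= eps * INR (Q * Q) ->
  (#|[set j | (x j, y j) \in Er]| < k)%N.
Proof.
move=> diverse d_n Er_small; rewrite ltnNge; apply/negP.
move=> /card_geqP [s [s_uniq s_size s_sub]].
have I_card : INR #|[set j in s]| = d * INR n.
  by rewrite cardsE (card_uniqP s_uniq) s_size d_n.
have many := diverse _ I_card.
have pairs_erased : (#|[set (x j, y j) | j in [set j in s]]| <= #|Er|)%N.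
  apply: subset_leq_card; apply/subsetP => p /imsetP [j]; rewrite inE => /s_sub.
  by rewrite inE => erased ->.
move/ssrnat.leP/le_INR: pairs_erased => pairs_erased.
apply: (Rlt_irrefl (INR #|Er|)).
exact: Rle_lt_trans Er_small (Rlt_le_trans _ _ _ many pairs_erased).
Qed.

Lemma card_pos_of_Rpower (T : finType) (A : {set T}) (x e : R) :
  Rpower x e <= INR #|A| -> (0 < #|A|)%N.
Proof.
move=> A_large; rewrite lt0n; apply/eqP => A0; move: A_large; rewrite A0 /=.
by have := exp_pos (e * ln x); rewrite /Rpower; Lra.lra.
Qed.

Lemma log2_packing_lower (q n k a m : nat) (delta : R) : (0 < a)%N ->
  Rpower (INR (2 ^ q)%N) (INR n * (1 - delta)) <= INR m ->
  (m <= a * (2 ^ n * (2 ^ q) ^ k))%N ->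
  INR n * (1 - delta) * INR q - INR n - INR k * INR q <= log2 (INR a).
Proof.
move=> a_pos m_large m_le.
have m_lower : INR n * (1 - delta) * INR q <= log2 (INR m).
  by rewrite -log2_Rpower_2expn; apply: log2_le; [exact: exp_pos|].
have m_upper : log2 (INR m) <= log2 (INR a) + INR (n + q * k).
  have pow_pos : 0 < INR (2 ^ (n + q * k)) by apply: INR_pos; rewrite expn_gt0.
  rewrite -(log2_2expn (n + q * k)) -(log2_mult (INR_pos a_pos) pow_pos).
  rewrite -mult_INR expnD expnM; apply: log2_le; last by apply/le_INR/ssrnat.leP.
  exact: Rlt_le_trans (exp_pos _) m_large.
move: m_upper; rewrite plus_INR mult_INR; Lra.lra.
Qed.

Lemma rate_lower_bound (q n k a b ma mb : nat) (d delta1 delta2 : R) :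
  (0 < n)%N -> (0 < a)%N -> (0 < b)%N -> d * INR n = INR k ->
  Rpower (INR (2 ^ q)%N) (INR n * (1 - delta1)) <= INR ma ->
  Rpower (INR (2 ^ q)%N) (INR n * (1 - delta2)) <= INR mb ->
  (ma <= a * (2 ^ n * (2 ^ q) ^ k))%N ->
  (mb <= b * (2 ^ n * (2 ^ q) ^ k))%N ->
  2 * INR q * (1 - ((delta1 + delta2) / 2 + d)) - 2 <= / INR n * log2 (INR (a * b)).
Proof.
move=> n_pos a_pos b_pos d_n ma_large mb_large ma_le mb_le.
have a_lower := log2_packing_lower a_pos ma_large ma_le.
have b_lower := log2_packing_lower b_pos mb_large mb_le.
rewrite -d_n in a_lower b_lower.
rewrite mult_INR (log2_mult (INR_pos a_pos) (INR_pos b_pos)).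
apply: (Rmult_le_reg_l (INR n)); first exact: INR_pos.
rewrite -Rmult_assoc Rinv_r ?Rmult_1_l; last exact/Rgt_not_eq/INR_pos.
Lra.lra.
Qed.

Theorem theorem3 (q n : nat) (eps d delta1 delta2 : R)
    (A B : {set word (2 ^ q)%N n}) :
  (1 <= q)%N -> (1 <= n)%N ->
  0 <= eps <= 1 -> 0 <= d <= 1 ->
  (exists k : nat, d * INR n = INR k) ->
  0 <= delta1 -> 0 <= delta2 ->
  diverse_sets d (2 * eps) A B ->
  Rpower (INR (2 ^ q)%N) (INR n * (1 - delta1)) <= INR #|A| ->
  Rpower (INR (2 ^ q)%N) (INR n * (1 - delta2)) <= INR #|B| ->
  / 2 <= prob_W eps (fun W : channel (2 ^ q)%N => zero_error_rate_ge n W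
           (2 * INR q * (1 - ((delta1 + delta2) / 2 + d)) - 2)).
Proof.
move=> _ n_pos eps01 _ [k d_n] _ _ diverse A_large B_large.
have [A' [A'_sub sepA' A_le]] := hamming_packing k A n_pos.
have [B' [B'_sub sepB' B_le]] := hamming_packing k B n_pos.
have A'_pos : (0 < #|A'|)%N.
  by have := leq_trans (card_pos_of_Rpower A_large) A_le; rewrite muln_gt0 => /andP [].
have B'_pos : (0 < #|B'|)%N.
  by have := leq_trans (card_pos_of_Rpower B_large) B_le; rewrite muln_gt0 => /andP [].
apply: prob_W_ge_half => // Er Er_small.
apply: (zero_error_rate_ge_of_rate n_pos (separated_code_rate A'_pos B'_pos sepA' sepB' _)).
  move=> x y xA' yB'; apply: diverse_few_erasures d_n Er_small.
  exact: diverse (subsetP A'_sub x xA') (subsetP B'_sub y yB').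
exact: rate_lower_bound n_pos A'_pos B'_pos d_n A_large B_large A_le B_le.
Qed.
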